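(* Let $m\ge 1$. In the chip-firing process on the self-loop graph beginning with $4m-1$ chips at site $0$ and run to completion, the number of firing moves at site $k$, for $-m\le k\le m$, is $(m-|k|)^2$.
   Context: The self-loop graph is the path graph on $\mathbb{Z}$ (each $i$ adjacent to $i\pm1$) with one self-loop at every vertex. A site can fire if it holds at least $3$ chips; firing sends one chip to each of the two neighboring sites and keeps one at the site. Running to completion means performing legal firing moves until every site has at most $2$ chips. *)

From mathcomp Require Import all_boot all_order all_algebra.
Set Implicit Arguments. Unset Strict Implicit. Unset Printing Implicit Defensive.
Import Order.TTheory GRing.Theory Num.Theory.
Local Open Scope ring_scope.

Definition config := int -> int.

(* Firing site x: x loses 3 chips, keeps one via the self-loop (net -2),
   and each neighbour x-1, x+1 gains one chip. *)
Definition fire (c : config) (x : int) : config :=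
  fun y => if y == x then c y - 2
           else if (y == x + 1) || (y == x - 1) then c y + 1
           else c y.

Fixpoint legal_run (c : config) (s : seq int) : Prop :=
  match s with
  | [::] => True
  | x :: s' => 3 <= c x /\ legal_run (fire c x) s'
  end.

Definition run_result (c : config) (s : seq int) : config := foldl fire c s.

Definition stable (c : config) : Prop := forall y, c y <= 2.

Definition complete_run (c : config) (s : seq int) : Prop :=
  legal_run c s /\ stable (run_result c s).

Definition init_config (m : nat) : config :=
  fun y => if y == 0 then (4 * m - 1)%:Z else 0.

(* A run s has odometer u (u y = number of firings at y) and ends at c + Δu, Δ the
   discrete Laplacian.  The odometer u y = (m - |y|)^2 for |y| <= m, 0 otherwise, is
   nonnegative and stabilizes the initial pile, so by the least action principle it
   dominates the odometer of every legal run; legal runs are thus of bounded length and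
   some run is complete.  For a complete run, d = u - odometer is nonnegative, vanishes
   at +-m, has Δd >= 0 off the origin and Δd(0) >= -1; convexity on each half-segment
   together with integrality forces d = 0. *)

From mathcomp Require Import all_boot all_order all_algebra zify.
From Stdlib Require Import Classical.
Set Implicit Arguments. Unset Strict Implicit. Unset Printing Implicit Defensive.
Import Order.TTheory GRing.Theory Num.Theory.
Local Open Scope ring_scope.

Definition odometer (s : seq int) (y : int) : int := (count_mem y s)%:Z.

Definition laplacian (v : int -> int) (y : int) : int :=
  v (y - 1) + v (y + 1) - 2 * v y.

Lemma odometer_cons x s y : odometer (x :: s) y = (x == y)%:Z + odometer s y.
Proof. by rewrite /odometer /= PoszD. Qed.

Lemma fireE c x y : fire c x y = c y + laplacian (fun z => (x == z)%:Z) y.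
Proof.
rewrite /fire /laplacian.
by case: (y =P x) => ?; case: (y =P x + 1) => ?; case: (y =P x - 1) => ?;
  case: (x =P y - 1) => ?; case: (x =P y + 1) => ?; case: (x =P y) => ? /=; lia.
Qed.

Lemma run_resultE c s y : run_result c s y = c y + laplacian (odometer s) y.
Proof.
elim: s c => [|x s IHs] c; first by rewrite /laplacian /odometer /=; lia.
by rewrite /run_result /= -/(run_result _ _) IHs fireE /laplacian !odometer_cons; lia.
Qed.

(* Firing x forces v x >= 1, and v minus the indicator of x stabilizes fire c x. *)
Lemma least_action c s v : legal_run c s -> (forall y, 0 <= v y) ->
  (forall y, c y + laplacian v y <= 2) -> forall y, odometer s y <= v y.
Proof.
elim: s c v => [|x s IHs] c v /=; first by move=> _ v_ge0 _ y; apply: v_ge0.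
move=> [cx_ge3 legal_s] v_ge0 v_stab.
have vx_ge1 : 1 <= v x.
  by have := v_stab x; have := v_ge0 (x - 1); have := v_ge0 (x + 1); rewrite /laplacian; lia.
pose v' y := v y - (x == y)%:Z.
have v'_ge0 y : 0 <= v' y by rewrite /v'; case: (x =P y) => [<-|] /=; have := v_ge0 y; lia.
have v'_stab y : fire c x y + laplacian v' y <= 2.
  by rewrite fireE /laplacian /v'; have := v_stab y; rewrite /laplacian; lia.
move=> y; have := IHs _ _ legal_s v'_ge0 v'_stab y.
by rewrite odometer_cons /v'; lia.
Qed.

Lemma legal_run_rcons c t x :
  legal_run c t -> 3 <= run_result c t x -> legal_run c (rcons t x).
Proof.
elim: t c => [|y t IHt] c /=; first by move=> _; split.
by move=> [cy_ge3 legal_t] tx_ge3; split; last apply: IHt.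
Qed.

Lemma complete_run_exists_of_bounded c (N : nat) :
  (forall t, legal_run c t -> (size t <= N)%N) -> exists s, complete_run c s.
Proof.
move=> size_le.
suff [//|[t [legal_t size_t]]] : (exists s, complete_run c s) \/
    exists t, legal_run c t /\ size t = N.+1.
  by have := size_le t legal_t; rewrite size_t ltnn.
elim: N.+1 => [|n [|[t [legal_t size_t]]]]; [by right; exists [::] | by left |].
have [stable_t|/not_all_ex_not[x unstable_x]] :=
  classic (stable (run_result c t)); first by left; exists t.
right; exists (rcons t x); rewrite size_rcons size_t; split => //.
by apply: legal_run_rcons => //; lia.
Qed.

Lemma size_le_sum_count (T : eqType) (s w : seq T) :
  {subset s <= w} -> (size s <= \sum_(y <- w) count_mem y s)%N.
Proof.
move=> sub_sw.
have count_sum (r : seq T) z : count_mem z r = (\sum_(x <- r) (x == z))%N.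
  by rewrite -sum1_count big_mkcond.
under eq_bigr do rewrite count_sum.
rewrite exchange_big -sum1_size big_seq [X in (_ <= X)%N]big_seq.
apply: leq_sum => x xs; under eq_bigr do rewrite eq_sym.
by rewrite -count_sum -has_count has_pred1 sub_sw.
Qed.

Section ConvexOnSegment.

Variables (f : int -> int) (n : int).
Hypothesis f_ge0 : forall y : int, 0 <= y <= n -> 0 <= f y.
Hypothesis f_n : f n = 0.
Hypothesis f_convex : forall y : int, 0 < y < n -> 0 <= laplacian f y.

Lemma convex_slope_le (x : int) (k : nat) : 0 <= x -> x + k < n ->
  f (x + 1) - f x <= f (x + k + 1) - f (x + k).
Proof.
elim: k => [|k IHk] x_ge0 xk_lt; first by rewrite addr0.
have -> : x + k.+1%:Z = x + k + 1 by lia.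
have := @f_convex (x + k + 1); rewrite /laplacian addrK.
by have := IHk x_ge0; lia.
Qed.

Lemma convex_secant (x : int) (k : nat) : 0 <= x -> x + k <= n -> x < n ->
  k%:Z * (f (x + 1) - f x) <= f (x + k) - f x.
Proof.
elim: k => [|k IHk] x_ge0 xk_le x_lt; first by rewrite addr0 mul0r subrr.
have -> : x + k.+1%:Z = x + k + 1 by lia.
by have := @convex_slope_le x k x_ge0; have := IHk x_ge0; lia.
Qed.

Lemma convex_nonincreasing (x : int) : 0 <= x < n -> f (x + 1) <= f x.
Proof.
move=> /andP[x_ge0 x_lt]; have := @convex_secant x (absz (n - x)) x_ge0.
have -> : x + absz (n - x) = n by lia.
by rewrite f_n; have := @f_ge0 x; nia.
Qed.

Lemma convex_flat_vanish : f 0 <= f 1 -> forall y, 0 <= y <= n -> f y = 0.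
Proof.
move=> f01 y /andP[y_ge0]; rewrite le_eqVlt => /predU1P[->//|y_lt].
have := @convex_slope_le 0 (absz y) (lexx 0).
have -> : 0 + (absz y)%:Z = y by lia.
have := @convex_secant y (absz (n - y)) y_ge0.
have -> : y + (absz (n - y))%:Z = n by lia.
by rewrite add0r f_n; have := @f_ge0 y; nia.
Qed.

End ConvexOnSegment.

Lemma laplacian_reflect v y : laplacian (fun z => v (- z)) y = laplacian v (- y).
Proof.
by rewrite /laplacian opprB (addrC 1) opprD [v (- y + 1) + _]addrC.
Qed.

(* Integrality matters: for rational-valued d the bound Δd(0) >= -1 would allow a small tent. *)
Lemma symmetric_convex_vanish (d : int -> int) (m : int) : 0 < m ->
  (forall y, - m <= y <= m -> 0 <= d y) -> d m = 0 -> d (- m) = 0 ->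
  (forall y, 0 < `|y| < m -> 0 <= laplacian d y) -> -1 <= laplacian d 0 ->
  forall y, - m <= y <= m -> d y = 0.
Proof.
move=> m_gt0 d_ge0 d_m d_Nm d_convex d_lap0.
pose dN z := d (- z).
have right_ge0 y : 0 <= y <= m -> 0 <= d y by move=> ?; apply: d_ge0; lia.
have left_ge0 y : 0 <= y <= m -> 0 <= dN y by move=> ?; apply: d_ge0; lia.
have right_convex y : 0 < y < m -> 0 <= laplacian d y by move=> ?; apply: d_convex; lia.
have left_convex y : 0 < y < m -> 0 <= laplacian dN y.
  by move=> ?; rewrite laplacian_reflect; apply: d_convex; lia.
have right_vanish := convex_flat_vanish right_ge0 d_m right_convex.
have left_vanish := convex_flat_vanish left_ge0 d_Nm left_convex.
have right_le := convex_nonincreasing right_ge0 d_m right_convex.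
have left_le := convex_nonincreasing left_ge0 d_Nm left_convex.
have dN0 : dN 0 = d 0 by rewrite /dN oppr0.
have d10 : d 1 <= d 0 := right_le 0 m_gt0.
have dN10 : d (- 1) <= d 0 := left_le 0 m_gt0.
have [right0 left0] : d 0 <= d 1 /\ dN 0 <= dN 1.
  have [d01|dN01] : d 0 <= d 1 \/ d 0 <= d (- 1).
    by have : -1 <= d (- 1) + d 1 - 2 * d 0 := d_lap0; lia.
  - split=> //; rewrite dN0 (right_vanish d01 0) ?lexx //; last by lia.
    by apply: left_ge0; lia.
  - split; last by rewrite dN0.
    rewrite -dN0 (left_vanish dN01 0) ?lexx //; last by lia.
    by apply: right_ge0; lia.
move=> y y_range; have [y_ge0|y_lt0] := lerP 0 y.
  by apply: right_vanish right0 _ _; lia.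
by rewrite -[y]opprK; apply: left_vanish left0 _ _; lia.
Qed.

Definition square_odometer (m : nat) (y : int) : int :=
  if `|y| <= m%:Z then (m%:Z - `|y|) ^+ 2 else 0.

Lemma square_odometer_ge0 m y : 0 <= square_odometer m y.
Proof. by rewrite /square_odometer; case: ifP; rewrite ?sqr_ge0. Qed.

Lemma square_odometer_gt0 m y : 0 < square_odometer m y -> `|y| < m%:Z.
Proof. by rewrite /square_odometer expr2; case: ifP; nia. Qed.

Lemma square_odometer_final m y : (1 <= m)%N ->
  init_config m y + laplacian (square_odometer m) y =
  if y == 0 then 1 else if `|y| < m%:Z then 2 else if `|y| == m%:Z then 1 else 0.
Proof.
move=> m_gt0; rewrite /init_config /laplacian /square_odometer !expr2.
by repeat case: ifP; nia.
Qed.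

Lemma square_odometer_final_le2 m y : (1 <= m)%N ->
  init_config m y + laplacian (square_odometer m) y <= 2.
Proof. by move=> m_gt0; rewrite square_odometer_final //; repeat case: ifP. Qed.

Lemma legal_run_odometer_le m t : (1 <= m)%N -> legal_run (init_config m) t ->
  forall y, odometer t y <= square_odometer m y.
Proof.
move=> m_gt0 legal_t; apply: least_action legal_t _ _ => y.
  exact: square_odometer_ge0.
exact: square_odometer_final_le2.
Qed.

Lemma legal_run_size_le m t : (1 <= m)%N -> legal_run (init_config m) t ->
  (size t <= \sum_(y <- [seq (i%:Z - m%:Z)%R | i <- iota 0 m.*2])
               absz (square_odometer m y))%N.
Proof.
move=> m_gt0 legal_t; have odometer_le := legal_run_odometer_le m_gt0 legal_t.
set window := [seq _ | i <- _].
have t_window : {subset t <= window}.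
  move=> x x_t; have : 0 < odometer t x by rewrite ltz_nat -has_count has_pred1.
  move=> /lt_le_trans/(_ (odometer_le x))/square_odometer_gt0 x_lt.
  by apply/mapP; exists (absz (x + m%:Z)); rewrite ?mem_iota; lia.
apply: leq_trans (size_le_sum_count t_window) _.
by apply: leq_sum => y _; have := odometer_le y; rewrite /odometer; lia.
Qed.

Lemma complete_run_init_exists m : (1 <= m)%N ->
  exists s, complete_run (init_config m) s.
Proof.
by move=> m_gt0; apply: complete_run_exists_of_bounded => t; apply: legal_run_size_le.
Qed.

Lemma complete_run_odometer m s : (1 <= m)%N -> complete_run (init_config m) s ->
  odometer s =1 square_odometer m.
Proof.
move=> m_gt0 [legal_s stable_s].
have odometer_le := legal_run_odometer_le m_gt0 legal_s.
pose d y := square_odometer m y - odometer s y.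
have lap_d y : laplacian d y =
    init_config m y + laplacian (square_odometer m) y - run_result (init_config m) s y.
  by rewrite run_resultE /laplacian /d; lia.
have final_y y := square_odometer_final y m_gt0.
have d_vanish : forall y, - m%:Z <= y <= m%:Z -> d y = 0.
  apply: symmetric_convex_vanish => [||||y y_range|].
  - by [].
  - by move=> y _; have := odometer_le y; rewrite /d; lia.
  - have := odometer_le m; rewrite /d /odometer /square_odometer expr2.
    by case: ifP; nia.
  - have := odometer_le (- m%:Z); rewrite /d /odometer /square_odometer expr2.
    by case: ifP; nia.
  - rewrite lap_d final_y; have := stable_s y; case: ifP => [/eqP y0|_].
      by move: y_range; rewrite y0 normr0 ltxx.
    by rewrite ifT; lia.
  - by rewrite lap_d final_y eqxx; have := stable_s 0; lia.
move=> y; have [y_le|y_gt] := lerP `|y| m%:Z.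
  by have := d_vanish y; rewrite /d; lia.
by have := odometer_le y; rewrite /odometer /square_odometer; case: ifP; lia.
Qed.

Theorem lemma3p9 (m : nat) (hm : (1 <= m)%N) :
  (exists s : seq int, complete_run (init_config m) s) /\
  (forall s : seq int, complete_run (init_config m) s ->
     forall k : int, - (m%:Z) <= k <= m%:Z ->
       (count_mem k s)%:Z = (m%:Z - `|k|) ^+ 2).
Proof.
split; first exact: complete_run_init_exists.
move=> s s_complete k k_range.
rewrite -[LHS]/(odometer s k) (complete_run_odometer hm s_complete).
by rewrite /square_odometer ifT //; lia.
Qed.
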